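(* Let $d\ge3$, $|\lambda|\le 2\sqrt{d-1}$, and let $v_1,\dots,v_d,w\in\mathbb{R}^d$ be unit vectors with $(v_i,v_j)=(\lambda^2-d)/(d(d-1))$ for $i\ne j$ and $(v_i,w)=\lambda/d$ for all $i$. Let $\alpha,\beta\in\mathbb{R}$ be such that the vectors $a_i=\alpha w+\beta v_i$ and $b_i=\alpha v_i+\beta w$ satisfy $(a_i,b_i)=0$ and $\|a_i\|_2=\|b_i\|_2=1$ for all $1\le i\le d$. Then there are numbers $t_1,t_2\ge0$ with $t_1+t_2=1$ such that for every $u\in\mathbb{R}^d$, $$\|u\|_2^2=\sum_{i=1}^d\Big(t_1(u,a_i)^2+t_2(u,b_i)^2\Big).$$
   Context: $(\cdot,\cdot)$ denotes the standard inner product on $\mathbb{R}^d$. *)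

(* classical reals. Vectors of R^d are represented as
   functions nat -> R, of which only coordinates 0..d-1 matter. *)
From Stdlib Require Import Reals Lra Lia.
Open Scope R_scope.

Fixpoint rsum (n : nat) (f : nat -> R) : R :=
  match n with
  | O => 0
  | S m => rsum m f + f m
  end.

Definition dot (d : nat) (u v : nat -> R) : R := rsum d (fun k => u k * v k).

Definition nrm2 (d : nat) (u : nat -> R) : R := dot d u u.

Definition lc (a : R) (x : nat -> R) (b : R) (y : nat -> R) : nat -> R :=
  fun k => a * x k + b * y k.

(** The vectors [v_i] form, up to a correction along [w], a tight frame:
    for every [u], [sum_i (u,v_i)^2 = (1-c) |u|^2 + c d (u,w)^2] where [c] is the
    common value of [(v_i,v_j)].  To see it, let [T] be the difference of the two
    sides viewed as a symmetric operator.  The Gram conditions give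
    [sum_i v_i = lambda w], hence [T v_i = T w = 0], hence [T^2 = -(1-c) T]; as
    [T] has trace [0], its Hilbert-Schmidt norm [tr T^2] vanishes and [T = 0].
    Expanding [(u,a_i)^2] and [(u,b_i)^2] and summing over [i], the identity of
    the theorem then reduces to [t1 beta^2 + t2 alpha^2 = 1/(1-c)], and the
    orthonormality of [a_i, b_i] shows that [1/(1-c)] lies between [alpha^2]
    and [beta^2] as soon as [lambda^2 <= 4(d-1)]. *)

From Stdlib Require Import Reals Lra Lia.
Open Scope R_scope.

Lemma rsum_ext n f g : (forall k, (k < n)%nat -> f k = g k) -> rsum n f = rsum n g.
Proof.
induction n as [|n IH]; intros H; simpl; [reflexivity|].
rewrite IH by (intros; apply H; lia). now rewrite H by lia.
Qed.

Lemma rsum_add n f g : rsum n (fun k => f k + g k) = rsum n f + rsum n g.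
Proof. induction n as [|n IH]; simpl; [lra|]. rewrite IH; ring. Qed.

Lemma rsum_scal_l n a f : rsum n (fun k => a * f k) = a * rsum n f.
Proof. induction n as [|n IH]; simpl; [ring|]. rewrite IH; ring. Qed.

Lemma rsum_scal_r n a f : rsum n (fun k => f k * a) = rsum n f * a.
Proof. induction n as [|n IH]; simpl; [ring|]. rewrite IH; ring. Qed.

Lemma rsum_const n a : rsum n (fun _ => a) = INR n * a.
Proof. induction n as [|n IH]; simpl rsum; [simpl; ring|]. rewrite IH, S_INR; ring. Qed.

Lemma rsum_swap n m f :
  rsum n (fun i => rsum m (fun j => f i j)) = rsum m (fun j => rsum n (fun i => f i j)).
Proof.
induction n as [|n IH]; simpl.
- rewrite rsum_const; ring.
- now rewrite IH, <- rsum_add.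
Qed.

Lemma rsum_kronecker n i f : (i < n)%nat ->
  rsum n (fun j => (if Nat.eqb j i then 1 else 0) * f j) = f i.
Proof.
induction n as [|n IH]; intros Hi; [lia|]. simpl.
destruct (Nat.eqb n i) eqn:E.
- apply Nat.eqb_eq in E; subst i.
  rewrite (rsum_ext n _ (fun _ => 0)), rsum_const; [ring|].
  intros k Hk. replace (Nat.eqb k n) with false by (symmetry; apply Nat.eqb_neq; lia). ring.
- apply Nat.eqb_neq in E. rewrite IH by lia. ring.
Qed.

Lemma rsum_nonneg n f : (forall k, (k < n)%nat -> 0 <= f k) -> 0 <= rsum n f.
Proof.
induction n as [|n IH]; intros H; simpl; [lra|].
assert (0 <= rsum n f) by (apply IH; intros; apply H; lia).
specialize (H n ltac:(lia)). lra.
Qed.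

Lemma rsum_nonneg_eq0 n f : (forall k, (k < n)%nat -> 0 <= f k) ->
  rsum n f = 0 -> forall k, (k < n)%nat -> f k = 0.
Proof.
induction n as [|n IH]; intros H Hs k Hk; [lia|]. simpl in Hs.
assert (0 <= rsum n f) by (apply rsum_nonneg; intros; apply H; lia).
assert (0 <= f n) by (apply H; lia).
destruct (Nat.eq_dec k n) as [->|Hkn]; [lra|].
apply IH; [intros; apply H; lia | lra | lia].
Qed.

Definition basis_vec (k : nat) : nat -> R := fun l => if Nat.eqb l k then 1 else 0.

Lemma dot_sym d x y : dot d x y = dot d y x.
Proof. unfold dot. apply rsum_ext; intros; ring. Qed.

Lemma dot_lc_l d a x b y z : dot d (lc a x b y) z = a * dot d x z + b * dot d y z.
Proof. unfold dot, lc. rewrite <- !rsum_scal_l, <- rsum_add. apply rsum_ext; intros; ring. Qed.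

Lemma dot_lc_r d a x b y z : dot d z (lc a x b y) = a * dot d z x + b * dot d z y.
Proof. now rewrite dot_sym, dot_lc_l, (dot_sym d x), (dot_sym d y). Qed.

Lemma dot_rsum_l d n y x :
  dot d (fun k => rsum n (fun j => y j k)) x = rsum n (fun j => dot d (y j) x).
Proof.
unfold dot. rewrite <- rsum_swap. apply rsum_ext; intros. now rewrite rsum_scal_r.
Qed.

Lemma dot_basis_l d k y : (k < d)%nat -> dot d (basis_vec k) y = y k.
Proof. apply rsum_kronecker. Qed.

Lemma dot_self_nonneg d x : 0 <= dot d x x.
Proof. apply rsum_nonneg; intros; apply Rle_0_sqr. Qed.

Lemma dot_self_eq0 d x : dot d x x = 0 -> forall k, (k < d)%nat -> x k = 0.
Proof.
intros H k Hk. apply Rsqr_0_uniq.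
exact (rsum_nonneg_eq0 d _ (fun k _ => Rle_0_sqr (x k)) H k Hk).
Qed.

Lemma dot_eq0_r d x y : (forall k, (k < d)%nat -> y k = 0) -> dot d x y = 0.
Proof.
intros H. unfold dot. rewrite (rsum_ext d _ (fun _ => 0)), rsum_const; [ring|].
intros k Hk. rewrite H by exact Hk. ring.
Qed.

Section TraceFree.

Variables (d : nat) (T : (nat -> R) -> nat -> R) (mu : R).
Hypothesis T_selfadjoint : forall x y, dot d x (T y) = dot d (T x) y.
Hypothesis T_sq : forall x, dot d (T x) (T x) = - mu * dot d x (T x).
Hypothesis T_trace0 : rsum d (fun k => dot d (basis_vec k) (T (basis_vec k))) = 0.

(* [tr (T^2) = -mu tr T = 0] kills every column [T e_k]. *)
Lemma trace_free_form_eq0 x : dot d x (T x) = 0.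
Proof.
assert (Hcol : forall k l, (k < d)%nat -> (l < d)%nat -> T (basis_vec k) l = 0).
{ assert (Hsq : rsum d (fun k => dot d (T (basis_vec k)) (T (basis_vec k))) = 0).
  { rewrite (rsum_ext d _ (fun k => - mu * dot d (basis_vec k) (T (basis_vec k))))
      by (intros; apply T_sq).
    rewrite rsum_scal_l, T_trace0. ring. }
  intros k l Hk Hl. apply (dot_self_eq0 d); [|exact Hl].
  exact (rsum_nonneg_eq0 d _ (fun k _ => dot_self_nonneg d _) Hsq k Hk). }
unfold dot. rewrite (rsum_ext d _ (fun _ => 0)), rsum_const; [ring|].
intros l Hl.
rewrite <- (dot_basis_l d l (T x)), T_selfadjoint by exact Hl.
rewrite dot_sym, dot_eq0_r by (intros; apply Hcol; assumption). ring.
Qed.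

End TraceFree.

Section Frame.

Variables (d : nat) (lam c : R) (v : nat -> nat -> R) (w : nat -> R).
Hypothesis d_pos : (0 < d)%nat.
Hypothesis c_eq : c * (INR d * (INR d - 1)) = lam ^ 2 - INR d.
Hypothesis v_unit : forall i, (i < d)%nat -> nrm2 d (v i) = 1.
Hypothesis w_unit : nrm2 d w = 1.
Hypothesis v_gram : forall i j, (i < d)%nat -> (j < d)%nat -> i <> j -> dot d (v i) (v j) = c.
Hypothesis v_w : forall i, (i < d)%nat -> dot d (v i) w = lam / INR d.

Let D_neq0 : INR d <> 0.
Proof. apply not_0_INR. lia. Qed.

Lemma gram_rsum i g : (i < d)%nat ->
  rsum d (fun j => dot d (v i) (v j) * g j) = (1 - c) * g i + c * rsum d g.
Proof.
intros Hi.
rewrite (rsum_ext d _ (fun j => (1 - c) * ((if Nat.eqb j i then 1 else 0) * g j) + c * g j)).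
- now rewrite rsum_add, !rsum_scal_l, rsum_kronecker.
- intros j Hj. destruct (Nat.eqb j i) eqn:E.
  + apply Nat.eqb_eq in E; subst j. pose proof (v_unit i Hi) as Hv. unfold nrm2 in Hv.
    rewrite Hv. ring.
  + apply Nat.eqb_neq in E. rewrite v_gram by lia. ring.
Qed.

(* The weak form of [sum_j v_j = lam w], obtained from [|sum_j v_j - lam w|^2 = 0]. *)
Lemma rsum_dot_v x : rsum d (fun j => dot d x (v j)) = lam * dot d x w.
Proof.
set (s := fun k => rsum d (fun j => v j k)).
assert (dot_s : forall y, dot d s y = rsum d (fun j => dot d (v j) y)) by apply dot_rsum_l.
assert (ss : dot d s s = lam ^ 2).
{ rewrite dot_s, (rsum_ext d _ (fun j => (1 - c) * 1 + c * rsum d (fun _ => 1))).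
  - rewrite !rsum_const. replace (lam ^ 2) with (c * (INR d * (INR d - 1)) + INR d)
      by (rewrite c_eq; ring).
    ring.
  - intros j Hj. rewrite <- (gram_rsum j (fun _ => 1)), dot_sym, dot_s by exact Hj.
    apply rsum_ext; intros. rewrite dot_sym. ring. }
assert (sw : dot d s w = lam).
{ rewrite dot_s, (rsum_ext d _ (fun _ => lam / INR d)) by exact v_w.
  rewrite rsum_const. field. exact D_neq0. }
set (z := lc 1 s (- lam) w).
assert (zz : dot d z z = 0).
{ unfold z. rewrite dot_lc_l, !dot_lc_r, (dot_sym d w s), ss, sw.
  unfold nrm2 in w_unit. rewrite w_unit. ring. }
pose proof (dot_eq0_r d x z (dot_self_eq0 d z zz)) as H.
unfold z in H. rewrite dot_lc_r, (dot_sym d x s), dot_s in H.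
rewrite (rsum_ext d _ (fun j => dot d (v j) x)) by (intros; apply dot_sym). lra.
Qed.

Definition frame_defect (x : nat -> R) : nat -> R := fun k =>
  rsum d (fun i => dot d x (v i) * v i k) - (1 - c) * x k - c * INR d * dot d x w * w k.

Lemma dot_frame_defect_r x y : dot d y (frame_defect x) =
  rsum d (fun i => dot d x (v i) * dot d y (v i))
  - (1 - c) * dot d y x - c * INR d * dot d x w * dot d y w.
Proof.
change (dot d y (frame_defect x)) with (rsum d (fun k => y k * frame_defect x k)).
unfold frame_defect.
rewrite (rsum_ext d _ (fun k => rsum d (fun i => dot d x (v i) * (y k * v i k))
  + (- (1 - c)) * (y k * x k) + (- (c * INR d * dot d x w)) * (y k * w k))).
- rewrite !rsum_add, !rsum_scal_l, rsum_swap.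
  rewrite (rsum_ext d (fun i => rsum d _) (fun i => dot d x (v i) * dot d y (v i)))
    by (intros; apply rsum_scal_l).
  fold (dot d y x) (dot d y w). ring.
- intros k Hk.
  rewrite (rsum_ext d (fun i => dot d x (v i) * (y k * v i k))
    (fun i => y k * (dot d x (v i) * v i k))) by (intros; ring).
  rewrite rsum_scal_l. ring.
Qed.

Lemma frame_defect_selfadjoint x y : dot d x (frame_defect y) = dot d (frame_defect x) y.
Proof.
rewrite (dot_sym d (frame_defect x) y), !dot_frame_defect_r, (dot_sym d x y), (dot_sym d y w), (dot_sym d x w).
rewrite (rsum_ext d (fun i => dot d x (v i) * _) (fun i => dot d y (v i) * dot d x (v i)))
  by (intros; ring).
ring.
Qed.

Lemma frame_defect_v i x : (i < d)%nat -> dot d x (frame_defect (v i)) = 0.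
Proof.
intros Hi. rewrite dot_frame_defect_r, gram_rsum, rsum_dot_v, v_w by exact Hi.
rewrite dot_sym. field. exact D_neq0.
Qed.

Lemma frame_defect_w x : dot d x (frame_defect w) = 0.
Proof.
rewrite dot_frame_defect_r.
rewrite (rsum_ext d _ (fun i => lam / INR d * dot d x (v i)))
  by (intros i Hi; rewrite dot_sym, v_w by exact Hi; reflexivity).
rewrite rsum_scal_l, rsum_dot_v. unfold nrm2 in w_unit. rewrite w_unit.
transitivity (dot d x w / INR d * (lam ^ 2 - INR d - c * (INR d * (INR d - 1)))).
- field. exact D_neq0.
- rewrite c_eq. ring.
Qed.

Lemma frame_defect_sq x :
  dot d (frame_defect x) (frame_defect x) = - (1 - c) * dot d x (frame_defect x).
Proof.
rewrite dot_frame_defect_r, (rsum_ext d _ (fun _ => 0)), rsum_const.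
- rewrite <- (frame_defect_selfadjoint x w), frame_defect_w, (dot_sym d (frame_defect x) x).
  ring.
- intros i Hi. rewrite <- frame_defect_selfadjoint, frame_defect_v by exact Hi. ring.
Qed.

Lemma frame_defect_trace0 :
  rsum d (fun k => dot d (basis_vec k) (frame_defect (basis_vec k))) = 0.
Proof.
rewrite (rsum_ext d _ (fun k => rsum d (fun i => v i k * v i k) + (- (1 - c)) * 1
  + (- (c * INR d)) * (w k * w k))).
- rewrite !rsum_add, !rsum_scal_l, rsum_swap, rsum_const.
  rewrite (rsum_ext d _ (fun _ => 1)), rsum_const by exact v_unit.
  unfold nrm2, dot in w_unit. rewrite w_unit. ring.
- intros k Hk. rewrite dot_frame_defect_r, !dot_basis_l by exact Hk.
  rewrite (rsum_ext d _ (fun i => v i k * v i k)) by (intros; rewrite dot_basis_l by exact Hk; ring).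
  unfold basis_vec. rewrite Nat.eqb_refl. ring.
Qed.

Theorem frame_identity u :
  rsum d (fun i => dot d u (v i) ^ 2) = (1 - c) * nrm2 d u + c * INR d * dot d u w ^ 2.
Proof.
pose proof (trace_free_form_eq0 d frame_defect (1 - c) frame_defect_selfadjoint
  frame_defect_sq frame_defect_trace0 u) as H.
rewrite dot_frame_defect_r in H.
rewrite (rsum_ext d _ (fun i => dot d u (v i) * dot d u (v i))) by (intros; ring).
unfold nrm2. lra.
Qed.

End Frame.

Lemma convex_comb_between a b C : (C - a) * (C - b) <= 0 ->
  exists t, 0 <= t <= 1 /\ t * b + (1 - t) * a = C.
Proof.
intros H. destruct (Req_dec a b) as [<-|Hab].
- exists 0. assert (C = a) by nra. lra.
- assert (Hpos : 0 < / ((b - a) * (b - a))).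
  { apply Rinv_0_lt_compat. pose proof (Rsqr_pos_lt (b - a) ltac:(lra)). unfold Rsqr in *. lra. }
  assert (HCa : 0 <= (C - a) * (b - a)).
  { replace ((C - a) * (b - a)) with ((C - a) * (C - a) - (C - a) * (C - b)) by ring.
    pose proof (Rle_0_sqr (C - a)). unfold Rsqr in *. lra. }
  assert (HbC : 0 <= (b - C) * (b - a)).
  { replace ((b - C) * (b - a)) with ((b - C) * (b - C) - (C - a) * (C - b)) by ring.
    pose proof (Rle_0_sqr (b - C)). unfold Rsqr in *. lra. }
  exists ((C - a) / (b - a)). split; [split|].
  + replace ((C - a) / (b - a)) with ((C - a) * (b - a) * / ((b - a) * (b - a)))
      by (field; lra).
    apply Rmult_le_pos; lra.
  + replace ((C - a) / (b - a)) with (1 - (b - C) * (b - a) * / ((b - a) * (b - a)))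
      by (field; lra).
    assert (0 <= (b - C) * (b - a) * / ((b - a) * (b - a))) by (apply Rmult_le_pos; lra).
    lra.
  + field. lra.
Qed.

(* With [sigma = alpha^2 + beta^2] and [L = lam / D], the two hypotheses are [|a_i| = 1] and
   [(a_i, b_i) = 0]; they force [1 / (1 - c) = sigma (D - 1) / D], and
   [(sigma (D-1)/D - alpha^2) (sigma (D-1)/D - beta^2) = sigma^2 (lam^2 - 4 (D-1)) / (4 D^2)]. *)
Lemma mixing_weight (D lam c alpha beta : R) :
  1 < D -> lam ^ 2 <= 4 * (D - 1) -> c * (D * (D - 1)) = lam ^ 2 - D ->
  alpha ^ 2 + beta ^ 2 + 2 * alpha * beta * (lam / D) = 1 ->
  (alpha ^ 2 + beta ^ 2) * (lam / D) + 2 * alpha * beta = 0 ->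
  exists t, 0 <= t <= 1 /\ (t * beta ^ 2 + (1 - t) * alpha ^ 2) * (1 - c) = 1.
Proof.
intros HD Hlam Hc Hnorm Horth.
set (L := lam / D) in *. set (sig := alpha ^ 2 + beta ^ 2) in *.
assert (Hsig : sig * (1 - L ^ 2) = 1).
{ replace (sig * (1 - L ^ 2)) with (sig + 2 * alpha * beta * L - L * (sig * L + 2 * alpha * beta))
    by ring.
  rewrite Hnorm, Horth. ring. }
set (C := sig * (D - 1) / D).
assert (HC : C * (1 - c) = 1).
{ assert (Hc' : c = (lam ^ 2 - D) / (D * (D - 1))) by (rewrite <- Hc; field; lra).
  rewrite Hc'. transitivity (sig * (1 - L ^ 2)); [|exact Hsig]. unfold C, L. field. lra. }
assert (Hbetween : (C - alpha ^ 2) * (C - beta ^ 2) <= 0).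
{ replace ((C - alpha ^ 2) * (C - beta ^ 2))
    with (sig ^ 2 * (lam ^ 2 - 4 * (D - 1)) / (4 * D ^ 2)).
  - assert (sig ^ 2 * (lam ^ 2 - 4 * (D - 1)) <= 0) by nra.
    assert (0 < / (4 * D ^ 2)) by (apply Rinv_0_lt_compat; nra).
    unfold Rdiv. nra.
  - replace ((C - alpha ^ 2) * (C - beta ^ 2)) with (C ^ 2 - C * sig + (alpha * beta) ^ 2)
      by (unfold sig; ring).
    replace (alpha * beta) with (- (sig * L) / 2) by lra.
    unfold C, L. field. lra. }
destruct (convex_comb_between _ _ _ Hbetween) as [t [Ht HtC]].
exists t. split; [exact Ht|]. now rewrite HtC.
Qed.

Theorem mainTheorem16 (d : nat) (lambda : R) (v : nat -> nat -> R) (w : nat -> R)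
  (alpha beta : R) :
  (3 <= d)%nat ->
  Rabs lambda <= 2 * sqrt (INR d - 1) ->
  (forall i, (i < d)%nat -> nrm2 d (v i) = 1) ->
  nrm2 d w = 1 ->
  (forall i j, (i < d)%nat -> (j < d)%nat -> i <> j ->
     dot d (v i) (v j) = (lambda ^ 2 - INR d) / (INR d * (INR d - 1))) ->
  (forall i, (i < d)%nat -> dot d (v i) w = lambda / INR d) ->
  (forall i, (i < d)%nat ->
     dot d (lc alpha w beta (v i)) (lc alpha (v i) beta w) = 0 /\
     nrm2 d (lc alpha w beta (v i)) = 1 /\
     nrm2 d (lc alpha (v i) beta w) = 1) ->
  exists t1 t2 : R, 0 <= t1 /\ 0 <= t2 /\ t1 + t2 = 1 /\
    forall u : nat -> R,
      nrm2 d u =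
      rsum d (fun i => t1 * (dot d u (lc alpha w beta (v i))) ^ 2
                     + t2 * (dot d u (lc alpha (v i) beta w)) ^ 2).
Proof.
intros Hd Hlam Hv Hw Hvv Hvw Hab.
set (D := INR d) in *. set (c := (lambda ^ 2 - D) / (D * (D - 1))) in Hvv.
assert (HD : 3 <= D) by (unfold D; replace 3 with (INR 3) by (simpl; ring); apply le_INR; lia).
assert (Hc : c * (D * (D - 1)) = lambda ^ 2 - D) by (unfold c; field; lra).
assert (Hlam2 : lambda ^ 2 <= 4 * (D - 1)).
{ rewrite <- pow2_abs. pose proof (sqrt_sqrt (D - 1) ltac:(lra)).
  pose proof (Rabs_pos lambda). pose proof (sqrt_pos (D - 1)). nra. }
pose proof (frame_identity d lambda c v w ltac:(lia) Hc Hv Hw Hvv Hvw) as Hframe.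
pose proof (rsum_dot_v d lambda c v w ltac:(lia) Hc Hv Hw Hvv Hvw) as Hsum.
destruct (Hab 0%nat ltac:(lia)) as [Horth [Hnorm _]].
unfold nrm2 in Hnorm, Hv, Hw.
rewrite dot_lc_l, !dot_lc_r, (dot_sym d w (v 0%nat)), Hvw, Hw, Hv in Horth, Hnorm by lia.
assert (Hnorm' : alpha ^ 2 + beta ^ 2 + 2 * alpha * beta * (lambda / D) = 1)
  by (rewrite <- Hnorm; ring).
destruct (mixing_weight D lambda c alpha beta ltac:(lra) Hlam2 Hc Hnorm'
  ltac:(rewrite <- Horth; ring)) as [t [Ht HK]].
exists t, (1 - t). split; [lra | split; [lra | split; [ring |]]].
intros u.
rewrite (rsum_ext d _ (fun i => (t * beta ^ 2 + (1 - t) * alpha ^ 2) * dot d u (v i) ^ 2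
  + (2 * alpha * beta * dot d u w) * dot d u (v i)
  + (t * alpha ^ 2 + (1 - t) * beta ^ 2) * dot d u w ^ 2))
  by (intros; rewrite !dot_lc_r; ring).
rewrite !rsum_add, !rsum_scal_l, rsum_const, Hframe, Hsum. fold D.
transitivity ((t * beta ^ 2 + (1 - t) * alpha ^ 2) * (1 - c) * nrm2 d u + dot d u w ^ 2 * D
  * (alpha ^ 2 + beta ^ 2 + 2 * alpha * beta * (lambda / D)
     - (t * beta ^ 2 + (1 - t) * alpha ^ 2) * (1 - c))).
- rewrite HK, Hnorm'. ring.
- field. lra.
Qed.
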